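(* Let $p$ be a prime and $G$ a finite $p$-group. Then $\mathfrak{p}_{H,p}=\mathfrak{p}_{K,p}$ for all $H,K\le G$. For a prime $q\ne p$ and $H,K\le G$, $\mathfrak{p}_{H,q}=\mathfrak{p}_{K,q}$ if and only if $H$ and $K$ are conjugate in $G$.
   Context: $A(H)$ is the Burnside ring of a finite group $H$; for $I\le H$ and $r$ a prime, $\varphi^I_{H,r}\colon A(H)\to\mathbb{Z}/r\mathbb{Z}$ is the ring map $X\mapsto|X^I|\bmod r$. The Burnside $G$-Tambara functor $\underline{A}_G$ has $\underline{A}_G(G/L)=A(L)$ (with restrictions, transfers $K\times_L-$, norms $\mathrm{Map}_L(K,-)$ and conjugations). For $K\le G$ and $r$ prime, $\mathfrak{p}_{K,r}$ is the ideal with $\mathfrak{p}_{K,r}(G/L)=\bigcap_{I\le L,\ I\preccurlyeq_GK}\ker(\varphi^I_{L,r})$, where $I\preccurlyeq_GK$ means $I$ is conjugate in $G$ to a subgroup of $K$. *)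

From mathcomp Require Import all_boot all_order all_algebra all_fingroup all_solvable.
Set Implicit Arguments. Unset Strict Implicit. Unset Printing Implicit Defensive.
Import GRing.Theory.

Section Burnside.
Variable gT : finGroupType.

Definition mark (L J I : {set gT}) : nat :=
  #|[set C in lcosets J L | [forall i in I, (i *: C)%g == C]]|.

(* A virtual L-set  sum_{J <= L} x J [L/J]  (coefficients at J not <= L are
   ignored). Every element of the Burnside ring A(L) arises this way. *)
Definition burnside_repr := {ffun {group gT} -> int}.

(* |X^I| for the virtual L-set X represented by x (an integer). *)
Definition marks (L I : {group gT}) (x : burnside_repr) : int :=
  (\sum_(J : {group gT} | J \subset L) x J * (mark L J I)%:Z)%R.

Definition in_ker_phi (L I : {group gT}) (r : nat) (x : burnside_repr) : Prop :=
  (r%:Z %| marks L I x)%Z.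

Definition subconj (G I K : {set gT}) : Prop :=
  exists2 g, g \in G & (I :^ g \subset K)%g.

Definition in_pideal (G K : {group gT}) (r : nat) (L : {group gT})
  (x : burnside_repr) : Prop :=
  forall I : {group gT}, I \subset L -> subconj G I K -> in_ker_phi L I r x.

(* equality of the ideals p_{H,r} and p_{K,r} of the Burnside G-Tambara functor,
   i.e. equality at every level G/L, L <= G *)
Definition pideal_eq (G H K : {group gT}) (r : nat) : Prop :=
  forall L : {group gT}, L \subset G ->
    forall x : burnside_repr, in_pideal G H r L x <-> in_pideal G K r L x.

End Burnside.

From mathcomp Require Import all_boot all_order all_algebra all_fingroup all_solvable.
Set Implicit Arguments. Unset Strict Implicit. Unset Printing Implicit Defensive.
Import GRing.Theory.

(* If a p-group I acts on a finite set X then |X^I| = |X| mod p, so when G is a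
   p-group every ideal p_{K,p}(G/L) is the kernel of X |-> |X| mod p, whatever K.
   For q <> p, conjugate subgroups clearly define the same ideal. Conversely,
   Moebius inversion in the subgroup lattice of K yields the virtual K-set
   e = sum_J |J| mu(J, K) [K/J]; counting the k in K with I^k <= J shows that
   |e^I| is |K| for I = K and 0 for every proper I <= K. Since |K| is a power of
   p, e lies in p_{H,q}(G/K) but not in p_{K,q}(G/K) unless K is subconjugate to
   H. By symmetry H and K are subconjugate to each other, hence conjugate. *)

Section BurnsideIdeals.
Variable gT : finGroupType.
Local Open Scope group_scope.
Implicit Types (A G H I J K L : {group gT}) (x : burnside_repr gT).

(* Actions are right actions in MathComp, hence the inverse. *)
Definition lmulVs (C : {set gT}) (a : gT) : {set gT} := a^-1 *: C.

Lemma lmulVs1 : lmulVs^~ 1 =1 id.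
Proof. by move=> C; rewrite /lmulVs invg1 lcoset1. Qed.

Lemma lmulVsM C : act_morph lmulVs C.
Proof. by move=> a b; rewrite /lmulVs invMg lcosetM. Qed.

Definition lmulVs_action := TotalAction lmulVs1 lmulVsM.

Lemma mark_Fix L J I : mark L J I = #|'Fix_(lcosets J L | lmulVs_action)(I)|.
Proof.
apply: eq_card => C; rewrite !inE; case: (C \in lcosets J L) => //=.
apply/forallP/subsetP => fixC a; last first.
  by apply/implyP=> Ia; have := fixC a^-1 (groupVr Ia); rewrite inE /lmulVs invgK.
by move=> Ia; rewrite inE /lmulVs; have /implyP/(_ (groupVr Ia)) := fixC a^-1.
Qed.

Lemma acts_lcosets L J I : I \subset L -> [acts I, on lcosets J L | lmulVs_action].
Proof.
move=> sIL; apply/subsetP => a Ia; rewrite !inE /=.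
apply/subsetP => _ /imsetP[y Ly ->].
rewrite inE /= /lmulVs lcosetE -lcosetM -lcosetE imset_f //.
by rewrite groupM // groupV (subsetP sIL).
Qed.

Lemma mark_modp (p : nat) L J I : p.-group I -> I \subset L ->
  mark L J I = #|lcosets J L| %[mod p].
Proof. by move=> pI sIL; rewrite mark_Fix -(pgroup_fix_mod pI (acts_lcosets J sIL)). Qed.

Lemma marks_modp (p : nat) L I x : p.-group I -> I \subset L ->
  (marks L I x = marks L 1%G x %[mod p])%Z.
Proof.
move=> pI sIL; apply/eqP; rewrite eqz_mod_dvd /marks -sumrB.
apply: rpred_sum => J _; rewrite -mulrBr dvdz_mull // -eqz_mod_dvd !modz_nat.
by rewrite (mark_modp J pI sIL) (mark_modp J (pgroup1 gT p) (sub1G L)).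
Qed.

Lemma in_pideal_pgroup (p : nat) G K L x : p.-group G -> L \subset G ->
  in_pideal G K p L x <-> in_ker_phi L 1%G p x.
Proof.
move=> pG sLG; split=> [inKx | ker1x I sIL _].
  by apply: inKx; [exact: sub1G | exists 1; rewrite ?conjs1g ?sub1G].
have pI : p.-group I := pgroupS (subset_trans sIL sLG) pG.
by apply/dvdz_mod0P; rewrite (marks_modp x pI sIL); apply/dvdz_mod0P.
Qed.

Lemma pideal_eq_pgroup (p : nat) G H K : p.-group G -> pideal_eq G H K p.
Proof.
move=> pG L sLG x.
exact: iff_trans (in_pideal_pgroup H x pG sLG) (iff_sym (in_pideal_pgroup K x pG sLG)).
Qed.

Lemma lcoset_fixedP J i k : (i *: (k *: J) == k *: J) = (i ^ k \in J).
Proof. by rewrite -lcosetM (sameP eqP lcoset_eqP) mem_lcoset conjgE mulgA. Qed.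

Lemma lcoset_fixed J I k : [forall i in I, i *: (k *: J) == k *: J] = (I :^ k \subset J).
Proof.
apply/forall_inP/subsetP => [fixI _ /imsetP[i Ii ->] | sIkJ i Ii].
  by rewrite -lcoset_fixedP fixI.
by rewrite lcoset_fixedP sIkJ ?memJ_conjg.
Qed.

Lemma card_mark L J I : J \subset L ->
  (#|J| * mark L J I)%N = #|[set k in L | I :^ k \subset J]|.
Proof.
move=> sJL; pose F := [set C in lcosets J L | [forall i in I, i *: C == C]].
rewrite -[RHS]sum1_card (partition_big (fun k => k *: J) (mem F)) /=; last first.
  move=> k; rewrite inE => /andP[Lk sIkJ].
  by rewrite inE lcoset_fixed sIkJ andbT -lcosetE imset_f.
rewrite /mark -/F mulnC -sum_nat_const; apply: eq_bigr => _ /setIdP[/imsetP[y Ly ->]].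
rewrite lcosetE => fixC; rewrite -(card_lcoset J y) -sum1_card; apply: eq_bigl => k.
rewrite inE; apply/idP/idP => [yJk | /andP[_ /eqP <-]]; last exact: lcoset_refl.
have /lcoset_eqP kJ_yJ := yJk; rewrite kJ_yJ eqxx andbT -lcoset_fixed kJ_yJ fixC.
by move: yJk; rewrite mem_lcoset => /(subsetP sJL) Lk; rewrite -(mulKVg y k) groupM.
Qed.

Definition mobius_ge K n (m : {group gT} -> int) :=
  forall A, A \subset K -> n <= #|A| ->
    (\sum_(J : {group gT} | (J \subset K) && (A \subset J)) m J = (A :==: K)%:R)%R.

Lemma mobius_ge_pred K n m : mobius_ge K n.+1 m -> exists m', mobius_ge K n m'.
Proof.
move=> mob_m.
pose above A := (\sum_(J : {group gT} | (J \subset K) && (A \proper J)) m J)%R.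
(* The identity at A involves m only at A and above, so it can be solved for m A. *)
pose m' A := if #|A| == n then ((A :==: K)%:R - above A)%R else m A.
have m'_large J : n < #|J| -> m' J = m J by rewrite /m' => /gtn_eqF->.
exists m' => A sAK; rewrite leq_eqVlt => /predU1P[nA | ltnA]; last first.
  rewrite -(mob_m A sAK ltnA); apply: eq_bigr => J /andP[_ sAJ].
  exact/m'_large/(leq_trans ltnA)/subset_leq_card.
rewrite (bigD1 A) ?sAK ?subxx //= {1}/m' -nA eqxx -[RHS](subrK (above A)).
congr (_ + _)%R.
apply: eq_big => [J | J /andP[/andP[_ sAJ] neJA]].
  by rewrite properEneq -andbA [(A \subset J) && _]andbC eq_sym.
by rewrite m'_large // nA proper_card // properEneq eq_sym neJA.
Qed.

Lemma mobius_exists K : exists m, mobius_ge K 0 m.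
Proof.
suff /(_ #|K|.+1) : forall k, exists m, mobius_ge K (#|K|.+1 - k) m by rewrite subnn.
elim=> [|k [m mob_m]].
  by exists (fun=> 0%R) => A sAK; rewrite subn0 ltnNge subset_leq_card.
apply: mobius_ge_pred (m) _ => A sAK le_A; apply: mob_m sAK _.
by rewrite subnS in le_A; exact: leq_trans (leqSpred _) le_A.
Qed.

Definition mobius_repr (m : {group gT} -> int) : burnside_repr gT :=
  [ffun J : {group gT} => (#|J|%:Z * m J)%R].

Lemma marks_mobius_repr K I m : mobius_ge K 0 m -> I \subset K ->
  marks K I (mobius_repr m) = (#|K|%:Z *+ (I :==: K))%R.
Proof.
move=> mob_m sIK.
have mob_conj k : k \in K ->
    (\sum_(J : {group gT} | (J \subset K) && (I :^ k \subset J)) m J = (I :==: K)%:R)%R.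
  move=> Kk; have sIkK : (I :^ k)%G \subset K by rewrite /= -(conjGid Kk) conjSg.
  by rewrite (mob_m _ sIkK) //= -{1}(conjGid Kk) (inj_eq (@conjsg_inj _ k)).
transitivity (\sum_(J : {group gT} | J \subset K)
                \sum_(k | (k \in K) && (I :^ k \subset J)) m J)%R.
  apply: eq_bigr => J sJK; rewrite ffunE mulrAC -PoszM card_mark // -sum1dep_card.
  by rewrite -natz natr_sum mulr_suml; apply: eq_bigr => k _; rewrite mul1r.
rewrite (exchange_big_dep (mem K)) /=; last by move=> J k _ /andP[].
transitivity (\sum_(k in K) ((I :==: K)%:R : int))%R.
  by apply: eq_bigr => k Kk; rewrite -(mob_conj k Kk); apply: eq_bigl => J; rewrite Kk.
by rewrite sumr_const -mulrnA mulnC mulrnA natz.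
Qed.

Lemma subconjP G I K : reflect (subconj G I K) [exists (g | g \in G), I :^ g \subset K].
Proof. exact: exists_inP. Qed.

Lemma subconj_refl G K : subconj G K K.
Proof. by exists 1; rewrite ?conjsg1. Qed.

Lemma subconj_conjr G I H K g : g \in G -> H :^ g = K -> subconj G I H -> subconj G I K.
Proof.
by move=> Gg defK [h Gh sIhH]; exists (h * g); rewrite ?groupM // conjsgM -defK conjSg.
Qed.

Lemma pideal_eq_conj G H K (r : nat) g : g \in G -> H :^ g = K -> pideal_eq G H K r.
Proof.
move=> Gg defK L sLG x; split=> inx I sIL sIK; apply: inx => //.
  by apply: subconj_conjr (groupVr Gg) _ sIK; rewrite -defK conjsgK.
exact: subconj_conjr Gg defK sIK.
Qed.

Lemma pideal_eq_sym G H K (r : nat) : pideal_eq G H K r -> pideal_eq G K H r.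
Proof. by move=> eqHK L sLG x; apply: iff_sym; apply: eqHK. Qed.

Lemma pideal_eq_subconj (p q : nat) G H K : p.-group G -> prime q -> q != p ->
  K \subset G -> pideal_eq G H K q -> subconj G K H.
Proof.
move=> pG q_pr neq_qp sKG eqHK; apply/subconjP; apply: contraT => /subconjP nsKH.
have [m mob_m] := mobius_exists K.
have inH : in_pideal G H q K (mobius_repr m).
  move=> I sIK sIH; rewrite /in_ker_phi marks_mobius_repr //.
  by case: eqP sIH => [-> /nsKH | _ _] //; rewrite mulr0n dvdz0.
have := (eqHK K sKG _).1 inH K (subxx K) (subconj_refl G K).
rewrite /in_ker_phi marks_mobius_repr // eqxx mulr1n dvdzE /= => q_dvd_K.
have := pgroupP (pgroupS sKG pG) q q_pr q_dvd_K.
by rewrite inE (negPf neq_qp).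
Qed.
End BurnsideIdeals.

Unset Implicit Arguments.

Theorem corollary4p17 (gT : finGroupType) (G : {group gT}) (p : nat) :
  prime p -> (p.-group G)%g ->
  (forall H K : {group gT}, H \subset G -> K \subset G -> pideal_eq G H K p) /\
  (forall q : nat, prime q -> q != p ->
     forall H K : {group gT}, H \subset G -> K \subset G ->
       (pideal_eq G H K q <-> exists2 g, g \in G & (H :^ g)%g = K)).
Proof.
move=> _ pG; split=> [H K _ _ | q q_pr neq_qp H K sHG sKG].
  exact: pideal_eq_pgroup.
split=> [eqHK | [g Gg defK]]; last exact: pideal_eq_conj Gg defK.
have [g Gg sKgH] := pideal_eq_subconj pG q_pr neq_qp sKG eqHK.
have [h Gh sHhK] := pideal_eq_subconj pG q_pr neq_qp sHG (pideal_eq_sym eqHK).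
exists h => //; apply/eqP.
by rewrite eqEcard sHhK cardJg -(cardJg K g) subset_leq_card.
Qed.
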